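(* Let $R$ be a commutative ring which is free as an abelian group with $\mathbb{Z}$-basis $V$, let $p$ be a prime, $n\ge2$ and $r\ge1$. Then there is a group epimorphism $\varphi_r:\Gamma(SL_n(R),p^r)\to\mathfrak{sl}_n(\mathbb{F}_p[V])$ (target regarded as an additive group) whose kernel is $\Gamma(SL_n(R),p^{r+1})$. Consequently $\Gamma(SL_n(R),p^r)/\Gamma(SL_n(R),p^{r+1})\cong\mathfrak{sl}_n(\mathbb{F}_p[V])$ as groups.
   Context: $\Gamma(SL_n(R),p^m)=\ker\big(SL_n(R)\to SL_n(R\otimes_{\mathbb{Z}}\mathbb{Z}/p^m)\big)$. $\mathbb{F}_p[V]=R\otimes_{\mathbb{Z}}\mathbb{Z}/p=R/pR$, and $\mathfrak{sl}_n(\mathbb{F}_p[V])$ is the set of traceless $n\times n$ matrices over $R/pR$. *)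

From HB Require Import structures.
From mathcomp Require Import all_boot all_order all_algebra.
From mathcomp Require Import generic_quotient ring_quotient.
From mathcomp Require Import boolp.
Set Implicit Arguments. Unset Strict Implicit. Unset Printing Implicit Defensive.
Import GRing.Theory.
Local Open Scope ring_scope.
Local Open Scope quotient_scope.

Definition Zbasis (R : pzRingType) (V : eqType) (b : V -> R) : Prop :=
  (forall x : R, exists (s : seq V) (c : V -> int),
      x = \sum_(v <- s) b v *~ c v) /\
  (forall (s : seq V) (c : V -> int), uniq s ->
      \sum_(v <- s) b v *~ c v = 0 -> forall v, v \in s -> c v = 0).

Definition pmult (R : comPzRingType) (p : nat) : {pred R} :=
  fun x => `[< exists c : R, x = p%:R * c >].

Lemma pmult_zmod_closed (R : comPzRingType) (p : nat) :
  GRing.zmod_closed (@pmult R p).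
Proof.
split.
  by apply/asboolP; exists 0; rewrite mulr0.
move=> x y /asboolP [c ->] /asboolP [d ->].
by apply/asboolP; exists (c - d); rewrite mulrBr.
Qed.

HB.instance Definition _ (R : comPzRingType) (p : nat) :=
  GRing.isZmodClosed.Build R (@pmult R p) (@pmult_zmod_closed R p).

Export Quotient.

(* F_p[V] = R / pR, as an additive group (quotient Z-module). *)
Definition Fp_of (R : comPzRingType) (p : nat) := @Quotient.quot R (@pmult R p).

Definition redp (R : comPzRingType) (p : nat) (x : R) : Fp_of R p :=
  \pi_(Fp_of R p) x.

Definition is_sl (R : comPzRingType) (p n : nat) (X : 'M[Fp_of R p]_n) : Prop :=
  \sum_(i < n) X i i = 0.

Definition Gamma (R : comPzRingType) (p n m : nat) (A : 'M[R]_n) : Prop :=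
  \det A = 1 /\
  forall i j : 'I_n, exists c : R, (A - 1%:M) i j = (p ^ m)%:R * c.

From HB Require Import structures.
From mathcomp Require Import all_boot all_order all_algebra.
From mathcomp Require Import generic_quotient ring_quotient boolp.
From mathcomp Require Import fingroup perm ring.
Set Implicit Arguments. Unset Strict Implicit. Unset Printing Implicit Defensive.
Import GRing.Theory.
Local Open Scope ring_scope.
Local Open Scope quotient_scope.

(* Write t = p^r.  Of the Z-basis only the torsion-freeness of R is used: it
   makes t regular, so each A in Gamma(p^r) is uniquely 1 + tX, and phi(A) is
   X mod p.  Since (1 + tX)(1 + tY) = 1 + t(X + Y + tXY) and p divides t, phi
   is additive; since det(1 + tX) = 1 + t tr X mod t^2, det A = 1 forces t to
   divide tr X; and phi(A) = 0 iff p divides X iff A = 1 mod p^(r+1).  The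
   image is a subgroup containing everything that vanishes mod p, the a E_ij
   (i <> j) coming from elementary matrices, and the a (E_ii - E_jj) coming
   from the conjugate of 1 + ta E_ij by 1 + E_ji; these span sl_n. *)

Section ZbasisTorsion.
Variables (R : pzRingType) (V : eqType) (b : V -> R).

Lemma Zcomb_uniq (s : seq V) (c : V -> int) :
  exists (s' : seq V) (c' : V -> int),
    uniq s' /\ \sum_(v <- s) b v *~ c v = \sum_(v <- s') b v *~ c' v.
Proof.
elim: s => [|v s [s' [c' [us' e]]]]; first by exists [::], c; rewrite !big_nil.
rewrite big_cons e; have [vs'|vs'] := boolP (v \in s').
  exists s', (fun w => if w == v then c' v + c v else c' w); split => //.
  rewrite (bigD1_seq v) //= [RHS](bigD1_seq v) //= eqxx mulrzDr.
  rewrite addrA [b v *~ c v + _]addrC; congr (_ + _).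
  by apply: eq_bigr => w /negbTE ->.
exists (v :: s'), (fun w => if w == v then c v else c' w); split; first by rewrite /= vs'.
rewrite big_cons eqxx; congr (_ + _); apply: eq_big_seq => w ws'.
by case: eqP => // wv; rewrite -wv ws' in vs'.
Qed.

Lemma Zbasis_natr_lreg (m : nat) : Zbasis b -> (0 < m)%N -> GRing.lreg (m%:R : R).
Proof.
move=> [b_span b_free] m_gt0; apply: mulrI0_lreg => x mx0.
have [s [c ex]] := b_span x; have [s' [c' [us' e]]] := Zcomb_uniq s c.
rewrite ex e in mx0 *.
have mc'0 : \sum_(v <- s') b v *~ (c' v * m%:Z) = 0.
  rewrite -[RHS]mx0 big_distrr /=; apply: eq_bigr => v _.
  by rewrite mulrzA -pmulrn mulr_natl.
rewrite big_seq big1 // => v vs'; have /eqP := b_free _ _ us' mc'0 v vs'.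
by rewrite mulf_eq0 eqz_nat (gtn_eqF m_gt0) orbF => /eqP ->; rewrite mulr0z.
Qed.

End ZbasisTorsion.

Section MatrixExpansion.
Variable R : comPzRingType.

Definition rdvd (a x : R) := exists c, x = a * c.

Lemma rdvd0 a : rdvd a 0. Proof. by exists 0; rewrite mulr0. Qed.

Lemma rdvdD a x y : rdvd a x -> rdvd a y -> rdvd a (x + y).
Proof. by move=> [c ->] [d ->]; exists (c + d); rewrite mulrDr. Qed.

Lemma rdvdMl a x y : rdvd a x -> rdvd a (y * x).
Proof. by move=> [c ->]; exists (y * c); rewrite mulrCA. Qed.

(* Only the identity permutation contributes to [1 + t tr X]: every other one
   moves some [i], hence also [s i], and picks two off-diagonal entries. *)
Lemma det_add1_scale n (t : R) (X : 'M[R]_n) :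
  rdvd (t ^+ 2) (\det (1%:M + t *: X) - (1 + t * \tr X)).
Proof.
rewrite /determinant (bigD1 (1%g : 'S_n)) //= odd_perm1 expr0 mul1r.
under [\prod_(i < n) _]eq_bigr do rewrite perm1.
have diag_part : rdvd (t ^+ 2) (\prod_i (1%:M + t *: X : 'M[R]_n) i i - (1 + t * \tr X)).
  apply: (big_rec2 (fun y z => rdvd (t ^+ 2) (y - (1 + t * z)))).
    by exists 0; rewrite mulr0 mulr0 addr0 subrr.
  move=> i y z _ [c yz]; exists (X i i * z + c + t * X i i * c).
  rewrite !mxE eqxx /= (_ : y = 1 + t * z + t ^+ 2 * c); first by ring.
  by rewrite -yz; ring.
have off_part : rdvd (t ^+ 2)
    (\sum_(s : 'S_n | s != 1%g) (-1) ^+ s * \prod_i (1%:M + t *: X : 'M[R]_n) i (s i)).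
  apply: big_ind; [exact: rdvd0 | exact: rdvdD | move=> s s1; apply: rdvdMl].
  have [i si] : exists i, s i != i.
    apply/existsP; apply: contraR s1 => /existsPn s_id; apply/eqP/permP => i.
    by rewrite perm1; apply/eqP; move: (s_id i); rewrite negbK.
  have ssi : s (s i) != s i by apply: contra si => /eqP /perm_inj ->.
  rewrite (bigD1 i) //= (bigD1 (s i)) ?si //= !mxE.
  rewrite eq_sym (negbTE si) eq_sym (negbTE ssi) /= !add0r.
  move: (\prod_(_ < _ | _) _) => P.
  exists (X i (s i) * (X (s i) (s (s i)) * P)).
  by rewrite expr2 -!mulrA; congr (_ * _); rewrite mulrCA.
have [c dc] := rdvdD diag_part off_part; exists c; rewrite -dc; ring.
Qed.

Lemma mul_add1_scale n (t : R) (X Y : 'M[R]_n) :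
  (1%:M + t *: X) *m (1%:M + t *: Y) = 1%:M + t *: (X + Y + t *: (X *m Y)).
Proof.
rewrite mulmxDl !mulmxDr !mul1mx !mulmx1 -!scalemxAl -!scalemxAr !scalerA !scalerDr.
by rewrite scalerA -!addrA; congr (_ + _); rewrite addrCA.
Qed.

Lemma det_add1_delta n (i j : 'I_n) (s : R) :
  i != j -> \det (1%:M + s *: delta_mx i j) = 1.
Proof.
wlog lt_ji : i j / (j < i)%N => [hwlog ij|ij].
  have [lt_ij|lt_ji|/val_inj eq_ij] := ltngtP i j; last by rewrite eq_ij eqxx in ij.
  - rewrite -det_tr linearD /= trmx1 linearZ /= trmx_delta hwlog //.
    by rewrite eq_sym.
  - exact: hwlog.
rewrite det_trig; last first.
  apply/is_trig_mxP => k l lt_kl; rewrite !mxE.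
  have /negbTE -> : k != l by apply: contraTneq lt_kl => ->; rewrite ltnn.
  case: (k =P i) => [eki|]; last by rewrite mulr0 addr0.
  case: (l =P j) => [elj|]; last by rewrite mulr0 addr0.
  by move: lt_kl; rewrite eki elj ltnNge (ltnW lt_ji).
apply: big1 => k _; rewrite !mxE eqxx.
by case: (k =P i) => [->|]; rewrite ?(negbTE ij) mulr0 addr0.
Qed.

Lemma conj_add1_delta n (i j : 'I_n) (s : R) : i != j ->
  (1%:M - delta_mx j i) *m (1%:M + s *: delta_mx i j) *m (1%:M + delta_mx j i)
  = 1%:M + s *: (delta_mx i i + delta_mx i j - delta_mx j i - delta_mx j j).
Proof.
move=> ij; have ji : j != i by rewrite eq_sym.
rewrite !(mulmxDl, mulmxDr, mul1mx, mulmx1, mulNmx, mulmxN) -!scalemxAl -!scalemxAr.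
rewrite !(mul_delta_mx, mul_delta_mx_0) // -scalemxAl mul_delta_mx oppr0 sub0r.
by apply/matrixP => k l; rewrite !mxE; ring.
Qed.

End MatrixExpansion.

Lemma redp_is_zmod_morphism (R : comPzRingType) (p : nat) : zmod_morphism (@redp R p).
Proof. exact: raddfB. Qed.

HB.instance Definition _ (R : comPzRingType) (p : nat) :=
  GRing.isZmodMorphism.Build R (Fp_of R p) (@redp R p) (@redp_is_zmod_morphism R p).

Lemma redp_eq0 (R : comPzRingType) (p : nat) (x : R) :
  redp p x = 0 <-> rdvd p%:R x.
Proof.
rewrite /redp -(raddf0 (\pi_(Fp_of R p))).
split => [/eqP | px]; first by rewrite -idealrBE subr0 => /asboolP.
by apply/eqP; rewrite -idealrBE subr0; apply/asboolP.
Qed.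

Section CongruenceQuotient.
Variables (R : comPzRingType) (p r : nat).
Hypotheses (p_lreg : GRing.lreg (p%:R : R)) (r_gt0 : (0 < r)%N).

Local Notation t := ((p ^ r)%:R : R).
Local Notation red := (map_mx (@redp R p)).

Lemma t_lreg : GRing.lreg t.
Proof. by rewrite natrX; apply: lregX. Qed.

Lemma rdvd_p_t x : rdvd p%:R (t * x).
Proof. by exists ((p ^ r.-1)%:R * x); rewrite mulrA -natrM -expnS prednK. Qed.

Lemma red_scale_t n (X : 'M[R]_n) : red (t *: X) = 0.
Proof. by apply/matrixP => i j; rewrite !mxE; apply/redp_eq0/rdvd_p_t. Qed.

(* [quot_t x] is [x / t] when [t] divides [x], and [0] otherwise. *)
Definition quot_t (x : R) : R :=
  if pselect (exists c, x = t * c) is left h then projT1 (cid h) else 0.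

Lemma quot_tE x c : x = t * c -> quot_t x = c.
Proof.
move=> xtc; rewrite /quot_t; case: pselect => [h|[]]; last by exists c.
by case: (cid h) => /= d xtd; apply: t_lreg; rewrite -xtd.
Qed.

Definition phi n (A : 'M[R]_n) : 'M[Fp_of R p]_n := red (map_mx quot_t (A - 1%:M)).

Lemma phi_add1 n (X : 'M[R]_n) : phi (1%:M + t *: X) = red X.
Proof.
congr red; apply/matrixP => i j.
by rewrite !mxE addrC addKr (@quot_tE _ (X i j)) // mxE.
Qed.

Lemma Gamma_add1 n (X : 'M[R]_n) :
  \det (1%:M + t *: X) = 1 -> Gamma p r (1%:M + t *: X).
Proof. by move=> detA; split => // i j; exists (X i j); rewrite addrC addKr mxE. Qed.

Lemma GammaP n (A : 'M[R]_n) :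
  Gamma p r A -> exists2 X, A = 1%:M + t *: X & \det A = 1.
Proof.
move=> [detA A1]; exists (map_mx quot_t (A - 1%:M)) => //.
apply/matrixP => i j; have [c] := A1 i j; rewrite !mxE => e.
by rewrite (quot_tE e) -e addrC subrK.
Qed.

Lemma GammaM n (A B : 'M[R]_n) : Gamma p r A -> Gamma p r B -> Gamma p r (A *m B).
Proof.
move=> /GammaP [X -> detA] /GammaP [Y -> detB].
rewrite mul_add1_scale; apply: Gamma_add1.
by rewrite -mul_add1_scale det_mulmx detA detB mulr1.
Qed.

Lemma phiM n (A B : 'M[R]_n) :
  Gamma p r A -> Gamma p r B -> phi (A *m B) = phi A + phi B.
Proof.
move=> /GammaP [X -> _] /GammaP [Y -> _].
by rewrite mul_add1_scale !phi_add1 !map_mxD red_scale_t addr0.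
Qed.

(* [det (1 + t X) = 1 + t tr X mod t^2] and [t] is regular, so [t] divides [tr X]. *)
Lemma phi_sl n (A : 'M[R]_n) : Gamma p r A -> is_sl (phi A).
Proof.
move=> /GammaP [X -> detA]; rewrite phi_add1 /is_sl.
have [c dc] := det_add1_scale t X; rewrite detA in dc.
have trX : \tr X = t * - c.
  by apply: t_lreg; rewrite mulrA -expr2 mulrN -dc; ring.
under eq_bigr do rewrite mxE.
by rewrite -raddf_sum -/(mxtrace X) trX; apply/redp_eq0/rdvd_p_t.
Qed.

Lemma phi_ker n (A : 'M[R]_n) : Gamma p r A -> (phi A = 0 <-> Gamma p r.+1 A).
Proof.
move=> /GammaP [X -> detA]; rewrite phi_add1; split => [/matrixP X0 | [_ A1]].
  split => // i j; have /redp_eq0 [c Xij] : redp p (X i j) = 0.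
    by move: (X0 i j); rewrite !mxE.
  by exists c; rewrite addrC addKr mxE Xij expnSr natrM mulrA.
apply/matrixP => i j; rewrite !mxE; apply/redp_eq0.
have [c] := A1 i j; rewrite addrC addKr mxE expnSr natrM -mulrA => /t_lreg Xij.
by exists c.
Qed.

Definition in_phi_image n (Z : 'M[R]_n) := exists2 A, Gamma p r A & phi A = red Z.

Lemma in_phi_imageD n (Z1 Z2 : 'M[R]_n) :
  in_phi_image Z1 -> in_phi_image Z2 -> in_phi_image (Z1 + Z2).
Proof.
move=> [A gA eA] [B gB eB]; exists (A *m B); first exact: GammaM.
by rewrite phiM // eA eB map_mxD.
Qed.

Lemma in_phi_image_red0 n (Z : 'M[R]_n) : red Z = 0 -> in_phi_image Z.
Proof.
move=> Z0; exists (1%:M + t *: 0); last by rewrite phi_add1 Z0 map_mx0.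
by apply: Gamma_add1; rewrite scaler0 addr0 det1.
Qed.

Lemma in_phi_image_sum n (I : finType) (F : I -> 'M[R]_n) :
  (forall i, in_phi_image (F i)) -> in_phi_image (\sum_i F i).
Proof.
move=> hF; apply: (big_ind (@in_phi_image n)) => //; last exact: in_phi_imageD.
by apply: in_phi_image_red0; rewrite map_mx0.
Qed.

Lemma in_phi_image_delta n (i j : 'I_n) (a : R) :
  i != j -> in_phi_image (a *: delta_mx i j).
Proof.
move=> ij; exists (1%:M + t *: (a *: delta_mx i j)); last exact: phi_add1.
by apply: Gamma_add1; rewrite scalerA det_add1_delta.
Qed.

Lemma in_phi_image_diag n (i j : 'I_n) (a : R) :
  i != j -> in_phi_image (a *: (delta_mx i i - delta_mx j j)).
Proof.
move=> ij; have ji : j != i by rewrite eq_sym.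
have imD : in_phi_image
    (a *: (delta_mx i i + delta_mx i j - delta_mx j i - delta_mx j j)).
  eexists; last exact: phi_add1.
  apply: Gamma_add1; rewrite scalerA -conj_add1_delta // !det_mulmx det_add1_delta //.
  have := det_add1_delta (-1 : R) ji; have := det_add1_delta (1 : R) ji.
  by rewrite scaleN1r scale1r => -> ->; rewrite !mulr1.
rewrite (_ : a *: _ = a *: (delta_mx i i + delta_mx i j - delta_mx j i - delta_mx j j)
  + a *: delta_mx j i + (- a) *: delta_mx i j).
  apply: in_phi_imageD; last exact: in_phi_image_delta.
  by apply: in_phi_imageD => //; exact: in_phi_image_delta.
by apply/matrixP => k l; rewrite !mxE; ring.
Qed.

Lemma in_phi_image_traceless n (j0 : 'I_n) (Y : 'M[R]_n) :
  rdvd p%:R (\tr Y) -> in_phi_image Y.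
Proof.
move=> [c trY].
pose G i j := if i == j then Y i i *: (delta_mx i i - delta_mx j0 j0)
              else Y i j *: delta_mx i j.
have sumG i : \sum_j G i j = \sum_j Y i j *: delta_mx i j - Y i i *: delta_mx j0 j0.
  rewrite (bigD1 i) //= [in RHS](bigD1 i) //= /G eqxx scalerBr addrAC.
  by congr (_ + _ - _); apply: eq_bigr => j; rewrite eq_sym => /negbTE ->.
have -> : Y = \sum_i \sum_j G i j + \tr Y *: delta_mx j0 j0.
  under eq_bigr do rewrite sumG.
  by rewrite sumrB -matrix_sum_delta /mxtrace scaler_suml subrK.
apply: in_phi_imageD.
  apply: in_phi_image_sum => i; apply: in_phi_image_sum => j; rewrite /G.
  have [_|ij] := eqVneq i j; last exact: in_phi_image_delta.
  have [->|ij0] := eqVneq i j0; last exact: in_phi_image_diag.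
  by apply: in_phi_image_red0; rewrite subrr scaler0 map_mx0.
apply: in_phi_image_red0; apply/matrixP => k l; rewrite !mxE trY; apply/redp_eq0.
by exists (c * ((k == j0) && (l == j0))%:R); rewrite mulrA.
Qed.

Lemma phi_onto n (X : 'M[Fp_of R p]_n.+1) :
  is_sl X -> exists2 A, Gamma p r A & phi A = X.
Proof.
move=> slX; have redY : red (map_mx generic_quotient.repr X) = X.
  by apply/matrixP => i j; rewrite !mxE /redp reprK.
have [|A gA eA] := @in_phi_image_traceless _ ord0 (map_mx generic_quotient.repr X).
  apply/redp_eq0; rewrite /mxtrace raddf_sum -[RHS]slX.
  by apply: eq_bigr => i _; rewrite -[in RHS]redY !mxE.
by exists A; rewrite // eA redY.
Qed.

End CongruenceQuotient.

Theorem theorem3p2 (R : comPzRingType) (V : eqType) (b : V -> R)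
    (hb : Zbasis b) (p n r : nat) (hp : prime p) (hn : (2 <= n)%N)
    (hr : (1 <= r)%N) :
  exists phi : 'M[R]_n -> 'M[Fp_of R p]_n,
    [/\ (forall A, Gamma p r A -> is_sl (phi A)),
        (forall A B, Gamma p r A -> Gamma p r B -> phi (A *m B) = phi A + phi B),
        (forall X, is_sl X -> exists2 A, Gamma p r A & phi A = X) &
        (forall A, Gamma p r A -> (phi A = 0 <-> Gamma p r.+1 A))].
Proof.
have p_lreg := Zbasis_natr_lreg hb (prime_gt0 hp).
case: n hn => // n _; exists (@phi R p r n.+1); split.
- exact: phi_sl.
- exact: phiM.
- exact: phi_onto.
- exact: phi_ker.
Qed.
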